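(* Let $a(t), b(t), c(t), d(t), f(t), g(t)$ be suitable real-valued functions of time, and consider the one-dimensional time-dependent Schrödinger equation $$i\psi_t = -a(t)\psi_{xx} + b(t)x^2\psi - ic(t)x\psi_x - id(t)\psi - f(t)x\psi + ig(t)\psi_x .$$ Then the substitution $$\psi = \frac{e^{i(\alpha(t)x^2+\delta(t)x+\kappa(t))}}{\sqrt{\mu(t)}}\,\chi(\xi,\tau),\qquad \xi=\beta(t)x+\varepsilon(t),\quad \tau=\gamma(t)$$ transforms this non-autonomous and inhomogeneous Schrödinger equation into the autonomous form $$-i\chi_\tau = -\chi_{\xi\xi} + c_0\xi^2\chi \qquad (c_0=0,1)$$ provided that $$\frac{d\alpha}{dt} + b + 2c\alpha + 4a\alpha^2 = c_0 a\beta^4,$$ $$\frac{d\beta}{dt} + (c+4a\alpha)\beta = 0,$$ $$\frac{d\gamma}{dt} + a\beta^2 = 0,$$ $$\frac{d\delta}{dt} + (c+4a\alpha)\delta = f + 2g\alpha + 2c_0 a\beta^3\varepsilon,$$ $$\frac{d\varepsilon}{dt} = (g-2a\delta)\beta,$$ $$\frac{d\kappa}{dt} = g\delta - a\delta^2 + c_0 a\beta^2\varepsilon^2 .$$ Here $$\alpha = \frac{1}{4a}\frac{\mu'}{\mu} - \frac{d}{2a}.$$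
   Context: Generalized (driven) harmonic oscillators: the Hamiltonian is an arbitrary quadratic in $p=-i\partial/\partial x$ and $x$ with time-dependent real coefficients $a,b,c,d,f,g$. The functions $\alpha,\beta,\gamma,\delta,\varepsilon,\kappa,\mu$ are functions of $t$ only. *)

From Stdlib Require Export Reals.
From Coquelicot Require Export Coquelicot.
Open Scope R_scope.

Definition cexpi (theta : R) : C := (cos theta, sin theta).

From Stdlib Require Import Lra.
Open Scope R_scope.

(** Write [psi = m E X] with amplitude [m = mu^(-1/2)], phase factor [E = exp (i S)],
    [S = alpha x^2 + delta x + kappa], and [X = chi (beta x + eps, gamma)]. The product and
    chain rules express [psi_x], [psi_xx] and [psi_t] through [chi] and its partial
    derivatives, and the definition of [alpha] says exactly that [m'/m = -(2 a alpha + d)].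
    Once [chi_xixi] is eliminated by the equation for [chi] and the time derivatives of
    [alpha, ..., kappa] by the six ODEs, both sides agree identically. Nothing uses
    [c0 = 0 \/ c0 = 1]: the computation is valid for every real [c0]. *)

Lemma is_derive_C (u : R -> C) (x : R) (l : C) :
  is_derive (fun y => fst (u y)) x (fst l) ->
  is_derive (fun y => snd (u y)) x (snd l) -> is_derive u x l.
Proof.
  intros H1 H2.
  pose proof (filterdiff_comp'_2 (fun y => fst (u y)) (fun y => snd (u y))
    (fun p q => (p, q) : C) x _ _ (fun p q => (p, q) : C) H1 H2) as H.
  unfold is_derive. eapply filterdiff_ext; [| eapply filterdiff_ext_lin; [apply H |]].
  - intros y; simpl. destruct (u y); reflexivity.
  - eapply filterdiff_ext_lin; [eapply filterdiff_ext; [| apply filterdiff_id] |];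
      intros [p q]; reflexivity.
  - intros y. destruct l; reflexivity.
Qed.

Lemma is_derive_C_fst (u : R -> C) (x : R) (l : C) :
  is_derive u x l -> is_derive (fun y => fst (u y)) x (fst l).
Proof.
  intros H. unfold is_derive. eapply filterdiff_ext_lin.
  - apply (filterdiff_comp' u fst x _ fst H). apply filterdiff_linear, is_linear_fst.
  - intros y; reflexivity.
Qed.

Lemma is_derive_C_snd (u : R -> C) (x : R) (l : C) :
  is_derive u x l -> is_derive (fun y => snd (u y)) x (snd l).
Proof.
  intros H. unfold is_derive. eapply filterdiff_ext_lin.
  - apply (filterdiff_comp' u snd x _ snd H). apply filterdiff_linear, is_linear_snd.
  - intros y; reflexivity.
Qed.

Lemma is_derive_eq_value {V : NormedModule R_AbsRing} (f : R -> V) (x : R) (l l' : V) :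
  is_derive f x l -> l = l' -> is_derive f x l'.
Proof. now intros H <-. Qed.

Lemma is_derive_Rmult (f g : R -> R) (x df dg : R) :
  is_derive f x df -> is_derive g x dg ->
  is_derive (fun y => f y * g y) x (df * g x + f x * dg).
Proof. intros Hf Hg. apply (is_derive_mult f g x df dg Hf Hg), Rmult_comm. Qed.

Lemma is_derive_Cmult (u v : R -> C) (x : R) (u' v' : C) :
  is_derive u x u' -> is_derive v x v' ->
  is_derive (fun y => (u y * v y)%C) x (u' * v x + u x * v')%C.
Proof.
  intros Hu Hv.
  pose proof (is_derive_C_fst _ _ _ Hu) as Hu1. pose proof (is_derive_C_snd _ _ _ Hu) as Hu2.
  pose proof (is_derive_C_fst _ _ _ Hv) as Hv1. pose proof (is_derive_C_snd _ _ _ Hv) as Hv2.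
  apply is_derive_C; simpl; eapply is_derive_eq_value.
  - exact (is_derive_minus _ _ _ _ _ (is_derive_Rmult _ _ _ _ _ Hu1 Hv1)
                                     (is_derive_Rmult _ _ _ _ _ Hu2 Hv2)).
  - unfold minus, plus, opp; simpl. ring.
  - exact (is_derive_plus _ _ _ _ _ (is_derive_Rmult _ _ _ _ _ Hu1 Hv2)
                                    (is_derive_Rmult _ _ _ _ _ Hu2 Hv1)).
  - unfold plus; simpl. ring.
Qed.

Ltac complex_ring :=
  apply injective_projections; simpl;
  repeat progress (unfold scal, mult, plus, zero; simpl);
  match goal with |- @eq _ ?l ?r => change (@eq R l r) end; ring.

Lemma is_derive_Cmult_l (k : C) (u : R -> C) (x : R) (u' : C) :
  is_derive u x u' -> is_derive (fun y => (k * u y)%C) x (k * u')%C.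
Proof.
  intros Hu. eapply is_derive_eq_value.
  - exact (is_derive_Cmult _ _ _ _ _ (is_derive_const (K := R_AbsRing) k x) Hu).
  - complex_ring.
Qed.

Lemma is_derive_RtoC (r : R -> R) (x r' : R) :
  is_derive r x r' -> is_derive (fun y => RtoC (r y)) x (RtoC r').
Proof.
  intros H. apply is_derive_C; simpl.
  - exact H.
  - apply (is_derive_const (V := R_NormedModule)).
Qed.

Lemma is_derive_cexpi (S : R -> R) (x S' : R) :
  is_derive S x S' -> is_derive (fun y => cexpi (S y)) x (Ci * S' * cexpi (S x))%C.
Proof.
  intros H. apply is_derive_C; simpl; eapply is_derive_eq_value.
  - apply (is_derive_comp cos S); [apply is_derive_cos | exact H].
  - simpl. unfold scal; simpl; unfold mult; simpl. ring.
  - apply (is_derive_comp sin S); [apply is_derive_sin | exact H].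
  - simpl. unfold scal; simpl; unfold mult; simpl. ring.
Qed.

Lemma is_derive_inv_sqrt (h : R -> R) (t : R) :
  0 < h t -> ex_derive h t ->
  is_derive (fun s => / sqrt (h s)) t (- (Derive h t / (2 * h t)) * / sqrt (h t)).
Proof.
  intros Hpos Hder.
  assert (Hsqrt : 0 < sqrt (h t)) by (apply sqrt_lt_R0; exact Hpos).
  assert (Hsq : sqrt (h t) * sqrt (h t) = h t) by (apply sqrt_sqrt; lra).
  auto_derive.
  - repeat split; auto; lra.
  - change (Derive (fun s => h s) t) with (Derive h t). rewrite Hsq. field; lra.
Qed.

Lemma is_derive_comp_plane (F F1 F2 : R * R -> C) (p q : R -> R) (t p' q' : R) :
  filterdiff F (locally (p t, q t))
    (fun h : R * R => (fst h * F1 (p t, q t) + snd h * F2 (p t, q t))%C) ->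
  is_derive p t p' -> is_derive q t q' ->
  is_derive (fun s => F (p s, q s)) t (p' * F1 (p t, q t) + q' * F2 (p t, q t))%C.
Proof.
  intros HF Hp Hq.
  assert (Hpq : is_derive (fun s => (p s, q s) : C) t ((p', q') : C))
    by (apply is_derive_C; assumption).
  unfold is_derive. eapply filterdiff_ext_lin.
  - exact (filterdiff_comp' (fun s => (p s, q s) : C) F t _ _ Hpq HF).
  - intros y. complex_ring.
Qed.

Section GaugeTransform.

Variables (a b c d f g alpha beta gamma delta eps kappa mu : R -> R) (c0 : R).
Variables (chi chi_xi chi_tau chi_xixi : R * R -> C).

Definition phase (x t : R) : R := alpha t * x ^ 2 + delta t * x + kappa t.
Definition phase_x (x t : R) : R := 2 * alpha t * x + delta t.
Definition phase_t (x t : R) : R := Derive alpha t * x ^ 2 + Derive delta t * x + Derive kappa t.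
Definition xi (x t : R) : R := beta t * x + eps t.
Definition xi_t (x t : R) : R := Derive beta t * x + Derive eps t.
Definition amplitude (t : R) : R := / sqrt (mu t).
Definition amplitude_rate (t : R) : R := - (Derive mu t / (2 * mu t)).
Definition along (F : R * R -> C) (x t : R) : C := F (xi x t, gamma t).

Definition psi (x t : R) : C := (amplitude t * (cexpi (phase x t) * along chi x t))%C.
Definition psi_x (x t : R) : C :=
  (amplitude t * (cexpi (phase x t)
     * (Ci * phase_x x t * along chi x t + beta t * along chi_xi x t)))%C.
Definition psi_xx (x t : R) : C :=
  (amplitude t * (cexpi (phase x t)
     * ((Ci * (2 * alpha t)%R - (phase_x x t ^ 2)%R) * along chi x t
        + Ci * (2 * phase_x x t * beta t)%R * along chi_xi x t
        + (beta t ^ 2)%R * along chi_xixi x t)))%C.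
Definition psi_t (x t : R) : C :=
  (amplitude_rate t * psi x t
   + amplitude t * (cexpi (phase x t)
       * (Ci * phase_t x t * along chi x t + xi_t x t * along chi_xi x t
          + Derive gamma t * along chi_tau x t)))%C.

Hypothesis Hchi_diff : forall p : R * R,
  filterdiff chi (locally p)
    (fun h : R * R => (fst h * chi_xi p + snd h * chi_tau p)%C).

Lemma is_derive_along_chi_x (x t : R) :
  is_derive (fun y => along chi y t) x (beta t * along chi_xi x t)%C.
Proof.
  eapply is_derive_eq_value.
  - apply (is_derive_comp_plane chi chi_xi chi_tau (fun y => xi y t) (fun _ => gamma t)).
    + apply Hchi_diff.
    + unfold xi. auto_derive; auto; ring.
    + apply (is_derive_const (V := R_NormedModule)).
  - unfold along. complex_ring.
Qed.

Lemma is_derive_along_chi_t (x t : R) :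
  ex_derive beta t -> ex_derive eps t -> ex_derive gamma t ->
  is_derive (fun s => along chi x s) t
    (xi_t x t * along chi_xi x t + Derive gamma t * along chi_tau x t)%C.
Proof.
  intros Dbeta Deps Dgamma.
  apply (is_derive_comp_plane chi chi_xi chi_tau (fun s => xi x s) gamma).
  - apply Hchi_diff.
  - unfold xi, xi_t. auto_derive; [auto | rewrite !Rmult_1_l; reflexivity].
  - apply Derive_correct, Dgamma.
Qed.

Hypothesis Hchi_xixi : forall xi tau : R,
  is_derive (fun s => chi_xi (s, tau)) xi (chi_xixi (xi, tau)).

Lemma is_derive_along_chi_xi_x (x t : R) :
  is_derive (fun y => along chi_xi y t) x (beta t * along chi_xixi x t)%C.
Proof.
  eapply is_derive_eq_value.
  - apply (is_derive_comp (fun s => chi_xi (s, gamma t)) (fun y => xi y t)).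
    + apply Hchi_xixi.
    + unfold xi. auto_derive; auto.
  - unfold along. complex_ring.
Qed.

Lemma is_derive_cexpi_phase_x (x t : R) :
  is_derive (fun y => cexpi (phase y t)) x (Ci * phase_x x t * cexpi (phase x t))%C.
Proof.
  apply (is_derive_cexpi (fun y => phase y t)).
  unfold phase, phase_x. auto_derive; auto; ring.
Qed.

Lemma is_derive_cexpi_phase_t (x t : R) :
  ex_derive alpha t -> ex_derive delta t -> ex_derive kappa t ->
  is_derive (fun s => cexpi (phase x s)) t (Ci * phase_t x t * cexpi (phase x t))%C.
Proof.
  intros Dalpha Ddelta Dkappa.
  apply (is_derive_cexpi (fun s => phase x s)).
  unfold phase, phase_t. auto_derive; [auto | rewrite !Rmult_1_l; reflexivity].
Qed.

Lemma is_derive_psi_x (x t : R) : is_derive (fun y => psi y t) x (psi_x x t).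
Proof.
  eapply is_derive_eq_value.
  - apply is_derive_Cmult_l, is_derive_Cmult.
    + apply is_derive_cexpi_phase_x.
    + apply is_derive_along_chi_x.
  - unfold psi_x. complex_ring.
Qed.

Lemma is_derive_psi_xx (x t : R) : is_derive (fun y => psi_x y t) x (psi_xx x t).
Proof.
  eapply is_derive_eq_value.
  - apply is_derive_Cmult_l, is_derive_Cmult.
    + apply is_derive_cexpi_phase_x.
    + apply (is_derive_plus (V := C_R_NormedModule)).
      * apply is_derive_Cmult.
        -- apply is_derive_Cmult_l, is_derive_RtoC. unfold phase_x. auto_derive; auto.
        -- apply is_derive_along_chi_x.
      * apply is_derive_Cmult_l, is_derive_along_chi_xi_x.
  - unfold psi_xx, phase_x. complex_ring.
Qed.

Hypothesis Hmu : forall t, 0 < mu t.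
Hypothesis Dmu : forall t, ex_derive mu t.
Hypothesis Dalpha : forall t, ex_derive alpha t.
Hypothesis Dbeta : forall t, ex_derive beta t.
Hypothesis Dgamma : forall t, ex_derive gamma t.
Hypothesis Ddelta : forall t, ex_derive delta t.
Hypothesis Deps : forall t, ex_derive eps t.
Hypothesis Dkappa : forall t, ex_derive kappa t.

Lemma is_derive_psi_t (x t : R) : is_derive (fun s => psi x s) t (psi_t x t).
Proof.
  eapply is_derive_eq_value.
  - apply is_derive_Cmult; [apply is_derive_RtoC | apply is_derive_Cmult].
    + apply is_derive_inv_sqrt; auto.
    + apply is_derive_cexpi_phase_t; auto.
    + apply is_derive_along_chi_t; auto.
  - unfold psi_t, psi, amplitude, amplitude_rate. complex_ring.
Qed.

Hypothesis Ha : forall t, a t <> 0.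
Hypothesis Halpha_def : forall t,
  alpha t = Derive mu t / (4 * a t * mu t) - d t / (2 * a t).

Lemma amplitude_rate_eq (t : R) : amplitude_rate t = - (2 * a t * alpha t + d t).
Proof.
  unfold amplitude_rate. rewrite Halpha_def.
  pose proof (Ha t). pose proof (Hmu t). field. lra.
Qed.

Hypothesis Halpha : forall t,
  Derive alpha t + b t + 2 * c t * alpha t + 4 * a t * alpha t ^ 2 = c0 * a t * beta t ^ 4.
Hypothesis Hbeta : forall t, Derive beta t + (c t + 4 * a t * alpha t) * beta t = 0.
Hypothesis Hgamma : forall t, Derive gamma t + a t * beta t ^ 2 = 0.
Hypothesis Hdelta : forall t,
  Derive delta t + (c t + 4 * a t * alpha t) * delta t
  = f t + 2 * g t * alpha t + 2 * c0 * a t * beta t ^ 3 * eps t.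
Hypothesis Heps : forall t, Derive eps t = (g t - 2 * a t * delta t) * beta t.
Hypothesis Hkappa : forall t,
  Derive kappa t = g t * delta t - a t * delta t ^ 2 + c0 * a t * beta t ^ 2 * eps t ^ 2.
Hypothesis Hchi_eq : forall xi tau : R,
  (- Ci * chi_tau (xi, tau))%C = (- chi_xixi (xi, tau) + (c0 * xi ^ 2)%R * chi (xi, tau))%C.

Lemma psi_equation (x t : R) :
  (Ci * psi_t x t)%C
  = ((- a t)%R * psi_xx x t + (b t * x ^ 2)%R * psi x t + - Ci * ((c t * x)%R * psi_x x t)
     + - Ci * (d t * psi x t) + (- (f t * x))%R * psi x t + Ci * (g t * psi_x x t))%C.
Proof.
  assert (Hchi_xixi_eq : along chi_xixi x t
            = (Ci * along chi_tau x t + (c0 * xi x t ^ 2)%R * along chi x t)%C).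
  { unfold along. pose proof (Hchi_eq (xi x t) (gamma t)) as H.
    apply injective_projections;
      [apply (f_equal fst) in H | apply (f_equal snd) in H]; simpl in H |- *; lra. }
  assert (EA : Derive alpha t
               = c0 * a t * beta t ^ 4 - b t - 2 * c t * alpha t - 4 * a t * alpha t ^ 2)
    by (pose proof (Halpha t); lra).
  assert (EB : Derive beta t = - (c t + 4 * a t * alpha t) * beta t)
    by (pose proof (Hbeta t); lra).
  assert (EG : Derive gamma t = - (a t * beta t ^ 2)) by (pose proof (Hgamma t); lra).
  assert (ED : Derive delta t = f t + 2 * g t * alpha t + 2 * c0 * a t * beta t ^ 3 * eps t
                                - (c t + 4 * a t * alpha t) * delta t)
    by (pose proof (Hdelta t); lra).
  unfold psi_t, psi_xx, phase_t, xi_t.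
  rewrite Hchi_xixi_eq, amplitude_rate_eq, EA, EB, EG, ED, Heps, Hkappa.
  unfold psi, psi_x, phase_x, xi. complex_ring.
Qed.

End GaugeTransform.

Theorem lemma1
  (a b c d f g : R -> R)
  (alpha beta gamma delta eps kappa mu : R -> R)
  (c0 : R)
  (chi : R * R -> C) (chi_xi chi_tau chi_xixi : R * R -> C)
  (Hc0 : c0 = 0 \/ c0 = 1)
  (Ha : forall t, a t <> 0)
  (Hmu : forall t, 0 < mu t)
  (Dmu : forall t, ex_derive mu t)
  (Dalpha : forall t, ex_derive alpha t)
  (Dbeta : forall t, ex_derive beta t)
  (Dgamma : forall t, ex_derive gamma t)
  (Ddelta : forall t, ex_derive delta t)
  (Deps : forall t, ex_derive eps t)
  (Dkappa : forall t, ex_derive kappa t)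
  (Halpha_def : forall t,
      alpha t = Derive mu t / (4 * a t * mu t) - d t / (2 * a t))
  (Halpha : forall t, Derive alpha t + b t + 2 * c t * alpha t
              + 4 * a t * (alpha t) ^ 2 = c0 * a t * (beta t) ^ 4)
  (Hbeta : forall t, Derive beta t + (c t + 4 * a t * alpha t) * beta t = 0)
  (Hgamma : forall t, Derive gamma t + a t * (beta t) ^ 2 = 0)
  (Hdelta : forall t, Derive delta t + (c t + 4 * a t * alpha t) * delta t
              = f t + 2 * g t * alpha t + 2 * c0 * a t * (beta t) ^ 3 * eps t)
  (Heps : forall t, Derive eps t = (g t - 2 * a t * delta t) * beta t)
  (Hkappa : forall t, Derive kappa t
              = g t * delta t - a t * (delta t) ^ 2
                + c0 * a t * (beta t) ^ 2 * (eps t) ^ 2)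
  (Hchi_diff : forall p : R * R,
      filterdiff chi (locally p)
        (fun h : R * R => Cplus (Cmult (RtoC (fst h)) (chi_xi p))
                                (Cmult (RtoC (snd h)) (chi_tau p))))
  (Hchi_xixi : forall xi tau : R,
      is_derive (fun s : R => chi_xi (s, tau)) xi (chi_xixi (xi, tau)))
  (Hchi_eq : forall xi tau : R,
      Cmult (Copp Ci) (chi_tau (xi, tau))
      = Cplus (Copp (chi_xixi (xi, tau)))
              (Cmult (RtoC (c0 * xi ^ 2)) (chi (xi, tau)))) :
  let psi : R -> R -> C := fun x t =>
    Cmult (RtoC (/ sqrt (mu t)))
      (Cmult (cexpi (alpha t * x ^ 2 + delta t * x + kappa t))
             (chi (beta t * x + eps t, gamma t))) in
  exists psi_x psi_xx psi_t : R -> R -> C,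
    (forall x t, is_derive (fun y : R => psi y t) x (psi_x x t)) /\
    (forall x t, is_derive (fun y : R => psi_x y t) x (psi_xx x t)) /\
    (forall x t, is_derive (fun s : R => psi x s) t (psi_t x t)) /\
    (forall x t,
      Cmult Ci (psi_t x t)
      = Cplus (Cplus (Cplus (Cplus (Cplus
          (Cmult (RtoC (- a t)) (psi_xx x t))
          (Cmult (RtoC (b t * x ^ 2)) (psi x t)))
          (Cmult (Copp Ci) (Cmult (RtoC (c t * x)) (psi_x x t))))
          (Cmult (Copp Ci) (Cmult (RtoC (d t)) (psi x t))))
          (Cmult (RtoC (- (f t * x))) (psi x t)))
          (Cmult Ci (Cmult (RtoC (g t)) (psi_x x t)))).
Proof.
  intros psi.
  exists (psi_x alpha beta gamma delta eps kappa mu chi chi_xi),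
         (psi_xx alpha beta gamma delta eps kappa mu chi chi_xi chi_xixi),
         (psi_t alpha beta gamma delta eps kappa mu chi chi_xi chi_tau).
  split; [| split; [| split]]; intros x t.
  - eapply is_derive_psi_x; eassumption.
  - eapply is_derive_psi_xx; eassumption.
  - eapply is_derive_psi_t; eassumption.
  - eapply psi_equation; eassumption.
Qed.
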